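(* Let $a\in\mathbb{O}$ have norm one. The following are equivalent: (1) ${}^*\mathbb{O}_l(a,1)$ satisfies $(x^2,x^2,x^2)=0$; (2) ${}^*\mathbb{O}_r(a,1)$ satisfies $(x^2,x^2,x^2)=0$; (3) $a^2=\pm1$. Under these conditions ${}^*\mathbb{O}_l(a,1)$ and ${}^*\mathbb{O}_r(a,1)$ are isomorphic; moreover, if $a^2=-1$ then ${}^*\mathbb{O}_l(a,1)$ has degree four.
   Context: $\mathbb{O}$ is the real octonion algebra with conjugation $\bar x$. For norm-one $a$, ${}^*\mathbb{O}_l(a,1)$ and ${}^*\mathbb{O}_r(a,1)$ are the normed space of $\mathbb{O}$ with products $x\odot y=(\bar x a)y$ and $x\odot y=\bar x(ay)$ respectively. Here $x^2=x\odot x$ and $(x,y,z)=(x\odot y)\odot z-x\odot(y\odot z)$. The degree of a finite-dimensional algebra is the smallest $n$ such that every single-generated subalgebra has dimension $\le n$. *)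

From HB Require Import structures.
From mathcomp Require Import all_boot all_order all_algebra.
From mathcomp Require Import reals.
Set Implicit Arguments. Unset Strict Implicit. Unset Printing Implicit Defensive.
Import Order.TTheory GRing.Theory Num.Theory.
Local Open Scope ring_scope.

(* Real octonions, realised as 'rV[R]_8 (an R-vectType) with the Cayley-Dickson
   product on pairs of quaternions: (a,b)(c,d) = (ac - conj(d) b, da + b conj(c)).
   Coordinates 0..3 = first quaternion (1,i,j,k), 4..7 = second quaternion. *)

Section Oct.
Variable R : realType.

Record quat := Quat { q0 : R; q1 : R; q2 : R; q3 : R }.

Definition qmul (p q : quat) : quat :=
  Quat (q0 p * q0 q - q1 p * q1 q - q2 p * q2 q - q3 p * q3 q)
       (q0 p * q1 q + q1 p * q0 q + q2 p * q3 q - q3 p * q2 q)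
       (q0 p * q2 q - q1 p * q3 q + q2 p * q0 q + q3 p * q1 q)
       (q0 p * q3 q + q1 p * q2 q - q2 p * q1 q + q3 p * q0 q).
Definition qadd (p q : quat) : quat :=
  Quat (q0 p + q0 q) (q1 p + q1 q) (q2 p + q2 q) (q3 p + q3 q).
Definition qopp (p : quat) : quat := Quat (- q0 p) (- q1 p) (- q2 p) (- q3 p).
Definition qconj (p : quat) : quat := Quat (q0 p) (- q1 p) (- q2 p) (- q3 p).

Definition oct := 'rV[R]_8.

Definition ocoord (x : oct) (k : nat) : R := x ord0 (inord k).
Definition ofst (x : oct) : quat := Quat (ocoord x 0) (ocoord x 1) (ocoord x 2) (ocoord x 3).
Definition osnd (x : oct) : quat := Quat (ocoord x 4) (ocoord x 5) (ocoord x 6) (ocoord x 7).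
Definition of_quats (p q : quat) : oct :=
  \row_(i < 8) nth 0 [:: q0 p; q1 p; q2 p; q3 p; q0 q; q1 q; q2 q; q3 q] i.

Definition omul (x y : oct) : oct :=
  let a := ofst x in let b := osnd x in let c := ofst y in let d := osnd y in
  of_quats (qadd (qmul a c) (qopp (qmul (qconj d) b)))
           (qadd (qmul d a) (qmul b (qconj c))).

Definition oconj (x : oct) : oct :=
  \row_(i < 8) (if val i == 0%N then x ord0 i else - x ord0 i).
Definition oone : oct := \row_(i < 8) (val i == 0%N)%:R.
Definition onorm2 (x : oct) : R := \sum_(i < 8) x ord0 i ^+ 2.

Definition prodl (a : oct) (x y : oct) : oct := omul (omul (oconj x) a) y.
Definition prodr (a : oct) (x y : oct) : oct := omul (oconj x) (omul a y).

Definition sq (m : oct -> oct -> oct) (x : oct) : oct := m x x.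
Definition assoc (m : oct -> oct -> oct) (x y z : oct) : oct :=
  m (m x y) z - m x (m y z).

Definition isomorphic (m1 m2 : oct -> oct -> oct) : Prop :=
  exists f : oct -> oct,
    [/\ (forall (k : R) (x y : oct), f (k *: x + y) = k *: f x + f y),
        bijective f &
        forall x y, f (m1 x y) = m2 (f x) (f y)].

Definition subalg_closed (m : oct -> oct -> oct) (U : {vspace oct}) : Prop :=
  forall u v, u \in U -> v \in U -> m u v \in U.

Definition gen_subalg (m : oct -> oct -> oct) (x : oct) (U : {vspace oct}) : Prop :=
  [/\ x \in U, subalg_closed m U &
      forall V : {vspace oct}, x \in V -> subalg_closed m V -> (U <= V)%VS].

Definition degree_bound (m : oct -> oct -> oct) (n : nat) : Prop :=
  forall x U, gen_subalg m x U -> (\dim U <= n)%N.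

Definition has_degree (m : oct -> oct -> oct) (n : nat) : Prop :=
  degree_bound m n /\ forall k, degree_bound m k -> (n <= k)%N.

End Oct.

From Pilot Require Import Defs.
From HB Require Import structures.
From mathcomp Require Import all_boot all_order all_algebra.
From mathcomp Require Import reals.
From mathcomp Require Import ring lra.
Import Order.TTheory GRing.Theory Num.Theory.
Local Open Scope ring_scope.
Set Implicit Arguments. Unset Strict Implicit. Unset Printing Implicit Defensive.

(* Write a = a0 + a' with a' pure; for a unit, a^2 = 1 or -1 exactly when a' = 0 or a0 = 0.
   If a is pure, both products square every x to a pure octonion, and pure u satisfy
   (u,u,u) = 0; if a is real, all squares are real.  Conversely, a pure y orthogonal to a
   squares to |y|^2 conj(a) in both algebras, and for |a| = 1 the real part of
   (conj a, conj a, conj a) is 4 a0 |a'|^2; a nonzero such y exists unless a' = 0.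
   For pure a, x |-> a x conj(a) is an isomorphism; for real a the two products coincide.
   For pure a, the span of 1, a, x, ax is a subalgebra containing x, so the degree is at
   most 4, and for x = 1 + y as above, x, x^2, x^2 x^2 and x^2 x are linearly independent. *)

Local Notation re x := (ocoord x 0%N).

Section Coordinates.
Variable R : realType.
Implicit Types (p q : quat R) (x : oct R).

Definition mk8 (x0 x1 x2 x3 x4 x5 x6 x7 : R) : oct R :=
  of_quats (Quat x0 x1 x2 x3) (Quat x4 x5 x6 x7).

Definition qscale (k : R) p := Quat (k * q0 p) (k * q1 p) (k * q2 p) (k * q3 p).

Lemma ocoord_of_quats p q k : (k < 8)%N ->
  ocoord (of_quats p q) k = nth 0 [:: q0 p; q1 p; q2 p; q3 p; q0 q; q1 q; q2 q; q3 q] k.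
Proof. by move=> lt_k8; rewrite /ocoord mxE inordK. Qed.

Lemma ofst_of_quats p q : ofst (of_quats p q) = p.
Proof. by case: p => *; rewrite /ofst !ocoord_of_quats. Qed.

Lemma osnd_of_quats p q : osnd (of_quats p q) = q.
Proof. by case: q => *; rewrite /osnd !ocoord_of_quats. Qed.

Lemma oct_eta x : x = of_quats (ofst x) (osnd x).
Proof.
apply/rowP => i; rewrite mxE /ocoord.
by case: i => -[|[|[|[|[|[|[|[|//]]]]]]]] lt_i8; congr (x _ _); apply/val_inj; rewrite /= inordK.
Qed.

Lemma octW (P : oct R -> Prop) :
  (forall x0 x1 x2 x3 x4 x5 x6 x7 : R, P (mk8 x0 x1 x2 x3 x4 x5 x6 x7)) -> forall x, P x.
Proof.
by move=> Pmk8 x; rewrite (oct_eta x); case: (ofst x) (osnd x) => ???? [????]; apply: Pmk8.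
Qed.

Lemma pureW (P : oct R -> Prop) :
  (forall x1 x2 x3 x4 x5 x6 x7 : R, P (mk8 0 x1 x2 x3 x4 x5 x6 x7)) -> forall x, re x = 0 -> P x.
Proof.
move=> Pmk8 x; elim/octW: x => x0 ? ? ? ? ? ? ?.
by rewrite /mk8 ocoord_of_quats //= => ->; apply: Pmk8.
Qed.

Lemma omul_of_quats p q p' q' : omul (of_quats p q) (of_quats p' q') =
  of_quats (qadd (qmul p p') (qopp (qmul (qconj q') q))) (qadd (qmul q' p) (qmul q (qconj p'))).
Proof. by rewrite /omul !ofst_of_quats !osnd_of_quats. Qed.

Ltac coordwise := apply/rowP => -[[|[|[|[|[|[|[|[|//]]]]]]]] ?]; rewrite !mxE.

Lemma oconj_of_quats p q : oconj (of_quats p q) = of_quats (qconj p) (qopp q).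
Proof. by coordwise. Qed.
Lemma add_of_quats p q p' q' : of_quats p q + of_quats p' q' = of_quats (qadd p p') (qadd q q').
Proof. by coordwise. Qed.
Lemma opp_of_quats p q : - of_quats p q = of_quats (qopp p) (qopp q).
Proof. by coordwise. Qed.
Lemma scale_of_quats k p q : k *: of_quats p q = of_quats (qscale k p) (qscale k q).
Proof. by coordwise. Qed.
Lemma oone_of_quats : oone R = of_quats (Quat 1 0 0 0) (Quat 0 0 0 0).
Proof. by coordwise. Qed.
Lemma zero_of_quats : 0 = of_quats (Quat 0 0 0 0) (Quat (0 : R) 0 0 0).
Proof. by coordwise. Qed.

Lemma onorm2_of_quats p q : onorm2 (of_quats p q) =
  q0 p ^+ 2 + q1 p ^+ 2 + q2 p ^+ 2 + q3 p ^+ 2 + q0 q ^+ 2 + q1 q ^+ 2 + q2 q ^+ 2 + q3 q ^+ 2.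
Proof. by rewrite /onorm2 !big_ord_recr big_ord0 /= !mxE /= add0r. Qed.

Lemma of_quats_eq p q p' q' :
  q0 p = q0 p' -> q1 p = q1 p' -> q2 p = q2 p' -> q3 p = q3 p' ->
  q0 q = q0 q' -> q1 q = q1 q' -> q2 q = q2 q' -> q3 q = q3 q' ->
  of_quats p q = of_quats p' q'.
Proof. by case: p p' q q' => ???? [????] [????] [????] /= -> -> -> -> -> -> -> ->. Qed.

End Coordinates.

Ltac oct_simpl := rewrite /mk8 /assoc /sq /prodl /prodr;
  rewrite ?zero_of_quats ?(ofst_of_quats, osnd_of_quats, oconj_of_quats, add_of_quats,
    opp_of_quats, scale_of_quats, oone_of_quats, omul_of_quats, onorm2_of_quats,
    ocoord_of_quats) //=;
  cbn [q0 q1 q2 q3 qadd qmul qopp qconj qscale].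
Ltac oct_ring := oct_simpl; (apply: of_quats_eq || idtac);
  cbn [q0 q1 q2 q3 qadd qmul qopp qconj qscale]; ring.

Section Identities.
Variable R : realType.
Implicit Types (a x y z : oct R) (k : R).

Lemma omul1r x : omul (oone R) x = x.
Proof. by elim/octW: x => *; oct_ring. Qed.
Lemma omulr1 x : omul x (oone R) = x.
Proof. by elim/octW: x => *; oct_ring. Qed.

Lemma omulxx x : omul x x = (2 * re x) *: x - onorm2 x *: oone R.
Proof. by elim/octW: x => *; oct_ring. Qed.

Lemma omulC_re x y : omul y x =
  - omul x y + (2 * re x) *: y + (2 * re y) *: x + (2 * re (omul x y) - 4 * re x * re y) *: oone R.
Proof. by elim/octW: x => *; elim/octW: y => *; oct_ring. Qed.

Lemma omul_alt_l x y : omul x (omul x y) = (2 * re x) *: omul x y - onorm2 x *: y.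
Proof. by elim/octW: x => *; elim/octW: y => *; oct_ring. Qed.
Lemma omul_alt_r x y : omul (omul y x) x = (2 * re x) *: omul y x - onorm2 x *: y.
Proof. by elim/octW: x => *; elim/octW: y => *; oct_ring. Qed.

Lemma oconj_re x : oconj x = (2 * re x) *: oone R - x.
Proof. by elim/octW: x => *; oct_ring. Qed.

Lemma omul_linl k x y z : omul (k *: x + y) z = k *: omul x z + omul y z.
Proof. by elim/octW: x => *; elim/octW: y => *; elim/octW: z => *; oct_ring. Qed.
Lemma omul_linr k x y z : omul z (k *: x + y) = k *: omul z x + omul z y.
Proof. by elim/octW: x => *; elim/octW: y => *; elim/octW: z => *; oct_ring. Qed.

Lemma ocoord0 (i : nat) : ocoord (0 : oct R) i = 0.
Proof. by rewrite /ocoord mxE. Qed.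
Lemma ocoordZ c x (i : nat) : ocoord (c *: x) i = c * ocoord x i.
Proof. by rewrite /ocoord mxE. Qed.
Lemma ocoordB x y (i : nat) : ocoord (x - y) i = ocoord x i - ocoord y i.
Proof. by rewrite /ocoord !mxE. Qed.
Lemma re_oone : re (oone R) = 1.
Proof. by rewrite /ocoord mxE /= inordK. Qed.

Lemma onorm2_re_imag a : onorm2 a = re a ^+ 2 + \sum_(i < 8 | i != ord0) a ord0 i ^+ 2.
Proof.
rewrite /onorm2 (bigD1 ord0) //= /ocoord.
by congr (a _ _ ^+ 2 + _); apply/val_inj; rewrite /= inordK.
Qed.

Lemma re_sqr_le_onorm2 a : re a ^+ 2 <= onorm2 a.
Proof. by rewrite onorm2_re_imag lerDl sumr_ge0 // => i _; rewrite sqr_ge0. Qed.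

Lemma real_of_re_sqr a : re a ^+ 2 = onorm2 a -> a = re a *: oone R.
Proof.
rewrite onorm2_re_imag -[X in X = _]addr0 => /addrI/esym imag0.
apply/rowP => i; rewrite !mxE; have [i0 | i_neq0] := eqVneq i ord0.
  by rewrite i0 mulr1 /ocoord; congr (a _ _); apply/val_inj; rewrite /= inordK.
have /eqP := psumr_eq0P (fun j _ => sqr_ge0 (a ord0 j)) imag0 i_neq0.
rewrite sqrf_eq0 => /eqP ->.
by move: i_neq0; rewrite -(inj_eq val_inj) /= => /negbTE ->; rewrite mulr0.
Qed.

Lemma re_sqr_unit a : onorm2 a = 1 -> re (omul a a) = 2 * re a ^+ 2 - 1.
Proof. by move=> a1; rewrite omulxx a1 scale1r ocoordB ocoordZ re_oone expr2 mulrA. Qed.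

Lemma re_eq0_of_sqr_m1 a : onorm2 a = 1 -> omul a a = - oone R -> re a = 0.
Proof.
move=> a1 /(congr1 (fun x => re x)); rewrite re_sqr_unit // -scaleN1r ocoordZ re_oone => ?.
by apply/eqP; rewrite -sqrf_eq0; apply/eqP; lra.
Qed.

Lemma unit_sqr_pm1 a : onorm2 a = 1 ->
  omul a a = oone R \/ omul a a = - oone R <-> re a = 0 \/ re a ^+ 2 = 1.
Proof.
move=> a1; split=> [[a2 | /(re_eq0_of_sqr_m1 a1) a0] | [a0 | a_real]].
- by right; move: (re_sqr_unit a1); rewrite a2 re_oone => ?; lra.
- by left.
- by right; rewrite omulxx a1 scale1r a0 mulr0 scale0r sub0r.
have a_re : a = re a *: oone R := real_of_re_sqr (etrans a_real (esym a1)).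
left; rewrite omulxx a1 scale1r [X in _ *: X]a_re scalerA -[X in _ - X]scale1r -scalerBl.
by rewrite -mulrA -expr2 a_real (_ : 2 * 1 - 1 = 1) ?scale1r //; ring.
Qed.

End Identities.

Section Probe.
Variable R : realType.
Implicit Types (a : oct R) (b : bool).

(* A pure octonion orthogonal to [a], polynomial in the coordinates of [a].  Two
   variants are needed: the 6-sphere has no nowhere-vanishing tangent field, so no single
   such choice is nonzero for every pure unit [a]. *)
Definition probe (b : bool) a : oct R :=
  let c := ocoord a in
  if b then mk8 0 0 (c 3%N) (- c 2%N) (c 5%N) (- c 4%N) (- c 7%N) (c 6%N)
  else mk8 0 (- c 3%N) 0 (c 1%N) (c 6%N) (c 7%N) (- c 4%N) (- c 5%N).

Lemma onorm2_probe_ge a :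
  onorm2 a - re a ^+ 2 <= onorm2 (probe true a) + onorm2 (probe false a).
Proof.
elim/octW: a => a0 a1 a2 a3 a4 a5 a6 a7; rewrite /probe; oct_simpl; rewrite -subr_ge0.
rewrite [X in 0 <= X](_ : _ = a3 ^+ 2 + a4 ^+ 2 + a5 ^+ 2 + a6 ^+ 2 + a7 ^+ 2); last by ring.
by rewrite !addr_ge0 ?sqr_ge0.
Qed.

End Probe.

Section TwistedProducts.
Variable R : realType.
Variable prod : oct R -> oct R -> oct R -> oct R.
Hypothesis prod_lr : prod = @prodl R \/ prod = @prodr R.
Implicit Types (a x u : oct R) (k : R).

Lemma sq_probe b a : sq (prod a) (probe b a) = onorm2 (probe b a) *: oconj a.
Proof. by case: prod_lr => ->; elim/octW: a => *; case: b; rewrite /probe; oct_ring. Qed.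

Lemma re_assoc_conj a k : re (assoc (prod a) (k *: oconj a) (k *: oconj a) (k *: oconj a)) =
  4 * k ^+ 3 * onorm2 a * re a * (onorm2 a - re a ^+ 2).
Proof. by case: prod_lr => ->; elim/octW: a => *; oct_ring. Qed.

Lemma re_sq_pure a x : re a = 0 -> re (sq (prod a) x) = 0.
Proof. by move: a; case: prod_lr => ->; apply: pureW => *; elim/octW: x => *; oct_ring. Qed.

Lemma assoc_cube_pure a u : re a = 0 -> re u = 0 -> assoc (prod a) u u u = 0.
Proof.
move=> a0 u0; move: a a0 u u0; case: prod_lr => ->;
  by apply: pureW => a1 a2 a3 a4 a5 a6 a7; apply: pureW => *; oct_ring.
Qed.

Lemma sq_real k x : sq (prod (k *: oone R)) x = (k * onorm2 x) *: oone R.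
Proof. by case: prod_lr => ->; elim/octW: x => *; oct_ring. Qed.

Lemma assoc_cube_real k c :
  assoc (prod (k *: oone R)) (c *: oone R) (c *: oone R) (c *: oone R) = 0.
Proof. by case: prod_lr => ->; oct_ring. Qed.

Lemma assoc_sq_eq0_iff a : onorm2 a = 1 ->
  (forall x, assoc (prod a) (sq (prod a) x) (sq (prod a) x) (sq (prod a) x) = 0) <->
  re a = 0 \/ re a ^+ 2 = 1.
Proof.
move=> a1; split=> [assoc0 | [a0 x | a_real x]].
- have [-> | re_neq0] := eqVneq (re a) 0; first by left.
  have [|re2_neq1] := eqVneq (re a ^+ 2) 1; first by right.
  have probe0 b : onorm2 (probe b a) = 0.
    have /eqP := congr1 (fun x => re x) (assoc0 (probe b a)).
    rewrite sq_probe // re_assoc_conj // ocoord0 a1 mulr1 !mulf_eq0 subr_eq0.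
    rewrite (negbTE re_neq0) [1 == _]eq_sym (negbTE re2_neq1) !orbF pnatr_eq0 /=.
    by rewrite !orbb => /eqP.
  have := onorm2_probe_ge a; rewrite !probe0 a1 addr0 subr_le0 => re2_ge1.
  by case/eqP: re2_neq1; apply/eqP; rewrite eq_le re2_ge1 -{1}a1 re_sqr_le_onorm2.
- by apply: assoc_cube_pure => //; apply: re_sq_pure.
- rewrite (real_of_re_sqr (etrans a_real (esym a1))) sq_real //; exact: assoc_cube_real.
Qed.

End TwistedProducts.

Section Isomorphism.
Variable R : realType.
Implicit Types (a x y : oct R) (k : R).

Definition conj_by a x := omul (omul a x) (oconj a).

Lemma conj_by_lin a k x y : conj_by a (k *: x + y) = k *: conj_by a x + conj_by a y.
Proof.
by elim/octW: a => *; elim/octW: x => *; elim/octW: y => *; rewrite /conj_by; oct_ring.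
Qed.

Lemma conj_byK a x : conj_by (oconj a) (conj_by a x) = onorm2 a ^+ 2 *: x.
Proof. by elim/octW: a => *; elim/octW: x => *; rewrite /conj_by; oct_ring. Qed.

Lemma conj_byVK a x : conj_by a (conj_by (oconj a) x) = onorm2 a ^+ 2 *: x.
Proof. by elim/octW: a => *; elim/octW: x => *; rewrite /conj_by; oct_ring. Qed.

Lemma conj_by_prodl a x y : re a = 0 ->
  onorm2 a *: conj_by a (prodl a x y) = prodr a (conj_by a x) (conj_by a y).
Proof.
move: a; apply: pureW => *; elim/octW: x => *; elim/octW: y => *; rewrite /conj_by; oct_ring.
Qed.

Lemma isomorphic_pure a : re a = 0 -> onorm2 a = 1 -> isomorphic (prodl a) (prodr a).
Proof.
move=> a0 a1; exists (conj_by a); split.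
- exact: conj_by_lin.
- by exists (conj_by (oconj a)) => x; rewrite ?conj_byK ?conj_byVK a1 expr1n scale1r.
- by move=> x y; rewrite -conj_by_prodl // a1 scale1r.
Qed.

Lemma prodl_real k x y : prodl (k *: oone R) x y = prodr (k *: oone R) x y.
Proof. by elim/octW: x => *; elim/octW: y => *; oct_ring. Qed.

Lemma isomorphic_real k : isomorphic (prodl (k *: oone R)) (prodr (k *: oone R)).
Proof. by exists id; split=> //; [exists id | exact: prodl_real]. Qed.

End Isomorphism.

Section DegreeBound.
Variable R : realType.
Implicit Types (a x u v w : oct R) (s : seq (oct R)).

Lemma linear_span_closed (f : oct R -> oct R) s :
  (forall k u v, f (k *: u + v) = k *: f u + f v) ->
  (forall u, u \in s -> f u \in <<s>>%VS) -> forall u, u \in <<s>>%VS -> f u \in <<s>>%VS.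
Proof.
move=> f_lin f_s u /(coord_span (X := in_tuple s)) ->.
have f0 : f 0 = 0 by have := f_lin (-1) 0 0; rewrite scaler0 addr0 scaleN1r addNr.
apply: (big_ind (fun v => f v \in <<s>>%VS)) => [|v w fv fw|i _].
- by rewrite f0 mem0v.
- by rewrite -[v]scale1r f_lin scale1r rpredD.
by rewrite -[_ *: _]addr0 f_lin f0 addr0 rpredZ // f_s // mem_nth.
Qed.

Lemma omul_span_closed s :
  (forall u v, u \in s -> v \in s -> omul u v \in <<s>>%VS) ->
  forall u v, u \in <<s>>%VS -> v \in <<s>>%VS -> omul u v \in <<s>>%VS.
Proof.
move=> s_closed u v u_s; move: v; apply: linear_span_closed => [k ? ?|w w_s].
  exact: omul_linr.
move: u u_s; apply: (linear_span_closed (f := fun z => omul z w)) => [k ? ?|z z_s].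
  exact: omul_linl.
exact: s_closed.
Qed.

Definition quat_span a x := <<[:: oone R; a; x; omul a x]>>%VS.

Lemma omul_quat_span a x u v :
  u \in quat_span a x -> v \in quat_span a x -> omul u v \in quat_span a x.
Proof.
apply: omul_span_closed; set W := quat_span a x.
have [oneW aW xW axW] : [/\ oone R \in W, a \in W, x \in W & omul a x \in W].
  by split; apply: memv_span; rewrite !inE eqxx ?orbT.
have sqrW w : w \in W -> omul w w \in W by move=> wW; rewrite omulxx rpredB ?rpredZ.
have swapW w w' : omul w w' \in W -> w \in W -> w' \in W -> omul w' w \in W.
  by move=> ww'W wW w'W; rewrite omulC_re !rpredD ?rpredN ?rpredZ.
have aaxW : omul a (omul a x) \in W by rewrite omul_alt_l rpredB ?rpredZ.
have axxW : omul (omul a x) x \in W by rewrite omul_alt_r rpredB ?rpredZ.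
move=> y z; rewrite !inE => /or4P[]/eqP-> /or4P[]/eqP->; rewrite ?omul1r ?omulr1;
  [ exact: oneW | exact: aW              | exact: xW   | exact: axW
  | exact: aW   | exact: sqrW             | exact: axW  | exact: aaxW
  | exact: xW   | exact: (swapW _ _ axW)  | exact: sqrW | exact: (swapW _ _ axxW)
  | exact: axW  | exact: (swapW _ _ aaxW) | exact: axxW | exact: sqrW ].
Qed.

Lemma prodl_quat_span_closed a x : Defs.subalg_closed (prodl a) (quat_span a x).
Proof.
move=> u v uW vW; rewrite /prodl; do 2!apply: omul_quat_span => //.
  by rewrite oconj_re rpredB ?rpredZ // memv_span // inE eqxx.
by rewrite memv_span // !inE eqxx orbT.
Qed.

Lemma degree_bound_prodl a : degree_bound (prodl a) 4.
Proof.
move=> x U [_ _ U_min]; apply: (leq_trans _ (dim_span [:: oone R; a; x; omul a x])).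
by apply/dimvS/U_min; [rewrite memv_span // !inE eqxx !orbT | exact: prodl_quat_span_closed].
Qed.

End DegreeBound.

Section DegreeFour.
Variable R : realType.
Implicit Types (a x y u : oct R) (b : bool).

Definition low_powers (m : oct R -> oct R -> oct R) x :=
  [:: x; m x x; m (m x x) (m x x); m (m x x) x].

Lemma gen_subalg_of_free (m : oct R -> oct R -> oct R) x (W : {vspace oct R}) :
  x \in W -> Defs.subalg_closed m W -> (\dim W <= 4)%N -> free (low_powers m x) ->
  gen_subalg m x W /\ \dim W = 4%N.
Proof.
move=> xW W_closed dimW free_x.
have pow_sub (V : {vspace oct R}) :
    x \in V -> Defs.subalg_closed m V -> (<<low_powers m x>> <= V)%VS.
  move=> xV V_closed; have x2V : m x x \in V by exact: V_closed.
  by apply/span_subvP => u; rewrite !inE => /or4P[]/eqP->; rewrite ?xV ?x2V //; exact: V_closed.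
have dim_pow : \dim <<low_powers m x>> = 4%N := eqP free_x.
have W_pow : (W <= <<low_powers m x>>)%VS.
  by rewrite -(geq_leqif (dimv_leqif_sup (pow_sub W xW W_closed))) dim_pow.
split; last first.
  by apply/eqP; rewrite eqn_leq dimW; have := dimvS (pow_sub W xW W_closed); rewrite dim_pow.
by split=> // V xV V_closed; apply: subv_trans W_pow (pow_sub V xV V_closed).
Qed.

Definition odot u (v : oct R) : R := \sum_(i < 8) u ord0 i * v ord0 i.

Lemma odot_of_quats p q p' q' : odot (of_quats p q) (of_quats p' q') =
  q0 p * q0 p' + q1 p * q1 p' + q2 p * q2 p' + q3 p * q3 p' +
  q0 q * q0 q' + q1 q * q1 q' + q2 q * q2 q' + q3 q * q3 q'.
Proof. by rewrite /odot !big_ord_recr big_ord0 /= !mxE /= add0r. Qed.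

Lemma odot0r u : odot u 0 = 0.
Proof. by rewrite /odot big1 // => i _; rewrite mxE mulr0. Qed.

Lemma pow2_one_add_probe b a : re a = 0 ->
  prodl a (oone R + probe b a) (oone R + probe b a) =
  (1 - onorm2 (probe b a)) *: a + 2 *: omul a (probe b a).
Proof. by move: a; apply: pureW => a1 a2 a3 a4 a5 a6 a7 /=; case: b; rewrite /probe; oct_ring. Qed.

Lemma pow4_one_add_probe b a : re a = 0 ->
  let m := onorm2 (probe b a) in let s := (1 - m) *: a + 2 *: omul a (probe b a) in
  prodl a s s = onorm2 a *: ((1 - 6 * m + m ^+ 2) *: a + (4 - 4 * m) *: omul a (probe b a)).
Proof. by move: a; apply: pureW => a1 a2 a3 a4 a5 a6 a7 /=; case: b; rewrite /probe; oct_ring. Qed.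

Lemma pow3_one_add_probe b a : re a = 0 ->
  let m := onorm2 (probe b a) in let s := (1 - m) *: a + 2 *: omul a (probe b a) in
  prodl a s (oone R + probe b a) = (onorm2 a * (1 + m)) *: (oone R - probe b a).
Proof. by move: a; apply: pureW => a1 a2 a3 a4 a5 a6 a7 /=; case: b; rewrite /probe; oct_ring. Qed.

Lemma odot_probe_basis b a c1 c2 c3 c4 : re a = 0 ->
  let y := probe b a in let w := c1 *: oone R + c2 *: a + c3 *: y + c4 *: omul a y in
  [/\ odot (oone R) w = c1, odot a w = c2 * onorm2 a, odot y w = c3 * onorm2 y
    & odot (omul a y) w = c4 * (onorm2 a * onorm2 y)].
Proof.
move: a; apply: pureW => a1 a2 a3 a4 a5 a6 a7 /=; case: b; rewrite /probe;
  by split; oct_simpl; rewrite odot_of_quats; cbn [q0 q1 q2 q3 qadd qmul qopp qconj qscale];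
     ring.
Qed.

Lemma probe_basis_free b a c1 c2 c3 c4 :
  re a = 0 -> onorm2 a = 1 -> 0 < onorm2 (probe b a) ->
  c1 *: oone R + c2 *: a + c3 *: probe b a + c4 *: omul a (probe b a) = 0 ->
  [/\ c1 = 0, c2 = 0, c3 = 0 & c4 = 0].
Proof.
move=> a0 a1 m_gt0 w0; have [] := odot_probe_basis b c1 c2 c3 c4 a0.
rewrite /= w0 !odot0r a1 mulr1 mul1r => <- <- /esym/eqP c3m /esym/eqP c4m.
by move: c3m c4m; rewrite !mulf_eq0 (gt_eqF m_gt0) !orbF => /eqP -> /eqP ->.
Qed.

Lemma low_powers_combination n (e a y z : 'rV[R]_n) (m k0 k1 k2 k3 : R) :
  k0 *: (e + y) + (k1 *: ((1 - m) *: a + 2 *: z) +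
    (k2 *: ((1 - 6 * m + m ^+ 2) *: a + (4 - 4 * m) *: z) + (k3 *: ((1 + m) *: (e - y)) + 0))) =
  (k0 + k3 * (1 + m)) *: e + (k1 * (1 - m) + k2 * (1 - 6 * m + m ^+ 2)) *: a
  + (k0 - k3 * (1 + m)) *: y + (2 * k1 + k2 * (4 - 4 * m)) *: z.
Proof. by apply/rowP => i; rewrite !mxE; ring. Qed.

Lemma low_powers_coef_eq0 (m k0 k1 k2 k3 : R) : 0 <= m ->
  k0 + k3 * (1 + m) = 0 -> k1 * (1 - m) + k2 * (1 - 6 * m + m ^+ 2) = 0 ->
  k0 - k3 * (1 + m) = 0 -> 2 * k1 + k2 * (4 - 4 * m) = 0 ->
  [/\ k0 = 0, k1 = 0, k2 = 0 & k3 = 0].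
Proof.
move=> m_ge0 e1 e2 e3 e4; have m1_neq0 : 1 + m != 0 by rewrite gt_eqF // ltr_pwDl.
have /eqP : k3 * (1 + m) = 0 by lra.
rewrite mulf_eq0 (negbTE m1_neq0) orbF => /eqP k3_0.
have : 2 * (k2 * (1 + m) ^+ 2) =
    (1 - m) * (2 * k1 + k2 * (4 - 4 * m)) - 2 * (k1 * (1 - m) + k2 * (1 - 6 * m + m ^+ 2)).
  by ring.
rewrite e2 e4 !mulr0 subrr => /eqP.
rewrite !mulf_eq0 pnatr_eq0 !(negbTE m1_neq0) /= !orbF => /eqP k2_0.
by split=> //; move: e1 e4; rewrite k3_0 k2_0; lra.
Qed.

Lemma free_low_powers_probe b a :
  re a = 0 -> onorm2 a = 1 -> 0 < onorm2 (probe b a) ->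
  free (low_powers (prodl a) (oone R + probe b a)).
Proof.
move=> a0 a1 m_gt0; rewrite /low_powers pow2_one_add_probe //.
rewrite pow4_one_add_probe // pow3_one_add_probe // a1 scale1r mul1r.
apply/(@freeP _ _ _ (in_tuple _)) => k; rewrite !big_ord_recl big_ord0 /=.
rewrite low_powers_combination => /probe_basis_free [] // e1 e2 e3 e4.
have [k0 k1 k2 k3] := low_powers_coef_eq0 (ltW m_gt0) e1 e2 e3 e4.
by case=> -[|[|[|[|//]]]] lt_i4; [rewrite -k0 | rewrite -k1 | rewrite -k2 | rewrite -k3];
  congr k; apply: val_inj.
Qed.

Lemma exists_gen_subalg_dim4 a : re a = 0 -> onorm2 a = 1 ->
  exists x U, gen_subalg (prodl a) x U /\ \dim U = 4%N.
Proof.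
move=> a0 a1.
have [b m_gt0] : exists b, 0 < onorm2 (probe b a).
  have := onorm2_probe_ge a; rewrite a0 a1 expr2 mulr0 subr0 => probe_ge1.
  have [|probe1_le0] := ltP 0 (onorm2 (probe true a)); first by exists true.
  by exists false; lra.
exists (oone R + probe b a), (quat_span a (oone R + probe b a)).
apply: gen_subalg_of_free.
- by rewrite memv_span // !inE eqxx !orbT.
- exact: prodl_quat_span_closed.
- exact: dim_span.
exact: free_low_powers_probe.
Qed.

Lemma has_degree_pure_unit a : re a = 0 -> onorm2 a = 1 -> has_degree (prodl a) 4.
Proof.
move=> a0 a1; split=> [|n bound_n]; first exact: degree_bound_prodl.
by have [x [U [genU <-]]] := exists_gen_subalg_dim4 a0 a1; exact: bound_n genU.
Qed.

End DegreeFour.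

Theorem proposition5 (R : realType) (a : oct R) :
  onorm2 a = 1 ->
  let P1 := forall x : oct R,
      assoc (prodl a) (sq (prodl a) x) (sq (prodl a) x) (sq (prodl a) x) = 0 in
  let P2 := forall x : oct R,
      assoc (prodr a) (sq (prodr a) x) (sq (prodr a) x) (sq (prodr a) x) = 0 in
  let P3 := omul a a = oone R \/ omul a a = - oone R in
  [/\ (P1 <-> P2), (P2 <-> P3),
      (P3 -> isomorphic (prodl a) (prodr a)) &
      (omul a a = - oone R -> has_degree (prodl a) 4)].
Proof.
move=> a1; cbv zeta.
have assoc_l := assoc_sq_eq0_iff (prod := @prodl R) (or_introl erefl) a1.
have assoc_r := assoc_sq_eq0_iff (prod := @prodr R) (or_intror erefl) a1.
have sqr_pm1 := unit_sqr_pm1 a1.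
split.
- exact: iff_trans assoc_l (iff_sym assoc_r).
- exact: iff_trans assoc_r (iff_sym sqr_pm1).
- case/sqr_pm1 => [a0 | a_real]; first exact: isomorphic_pure.
  by rewrite (real_of_re_sqr (etrans a_real (esym a1))); exact: isomorphic_real.
- by move/(re_eq0_of_sqr_m1 a1) => a0; exact: has_degree_pure_unit.
Qed.
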